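(* Generalised Outer Multi-Objective RL (GOMORL), Occupancy Measure Orderings (OMO) and Trajectory Lottery Orderings (TLO) are equally expressive: for every environment $E$, $\mathrm{Ord}_{\mathrm{GOMORL}}(E)=\mathrm{Ord}_{\mathrm{OMO}}(E)=\mathrm{Ord}_{\mathrm{TLO}}(E)$.
   Context: An environment is a tuple $E=(\mathcal S,\mathcal A,\mathcal T,\mathcal I)$ where $\mathcal S,\mathcal A$ are finite nonempty sets, $\mathcal T:\mathcal S\times\mathcal A\to\Delta(\mathcal S)$ and $\mathcal I\in\Delta(\mathcal S)$. A policy is a map $\pi:\mathcal S\to\Delta(\mathcal A)$ (stationary, possibly stochastic); $\Pi^E$ denotes the set of all policies. A trajectory $\xi=(s_0,a_0,s_1,a_1,\dots)$ is generated under $\pi$ by $s_0\sim\mathcal I$, $a_t\sim\pi(s_t)$, $s_{t+1}\sim\mathcal T(s_t,a_t)$; $\mathbb E^\pi_\xi,\mathbb P^\pi$ denote expectation and probability under this distribution. An objective-specification formalism $X$ assigns to each environment $E$ a set of objective specifications, each inducing a total preorder $\succeq$ on $\Pi^E$; $\mathrm{Ord}_X(E)$ is the set of total preorders so induced. Occupancy measure: for $\gamma\in[0,1)$, $\vec m_\gamma(\pi)\in\mathbb R^{\mathcal S\times\mathcal A\times\mathcal S}$, $\vec m_\gamma(\pi)[s,a,s']=\sum_{t=0}^\infty\gamma^t\,\mathbb P^\pi[s_t=s,a_t=a,s_{t+1}=s']$, and $\vec m_\gamma(\Pi^E)=\{\vec m_\gamma(\pi):\pi\in\Pi^E\}$.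 Trajectory lottery: $L_{k,\pi}$ is the distribution of $(s_0,a_0,\dots,a_{k-1},s_k)$ under $\pi$, $L_\pi=(L_{0,\pi},L_{1,\pi},\dots)$, and $L_{\Pi^E}=\{L_\pi:\pi\in\Pi^E\}$. GOMORL: specification $(k,\mathcal R,\gamma,\succeq_J)$ with $k\in\mathbb N$, $\mathcal R:\mathcal S\times\mathcal A\times\mathcal S\to\mathbb R^k$ with components $\mathcal R_i$, $\gamma\in[0,1)$, $\succeq_J$ a total preorder on $\mathbb R^k$; with $\vec J(\pi)=(J_1(\pi),\dots,J_k(\pi))$, $J_i(\pi)=\mathbb E^\pi_\xi[\sum_{t=0}^\infty\gamma^t\mathcal R_i(s_t,a_t,s_{t+1})]$, it induces $\pi_1\succeq\pi_2\iff\vec J(\pi_1)\succeq_J\vec J(\pi_2)$. OMO: specification $(\gamma,\succeq_m)$ with $\gamma\in[0,1)$ and $\succeq_m$ a total preorder on $\vec m_\gamma(\Pi^E)$; it induces $\pi_1\succeq\pi_2\iff\vec m_\gamma(\pi_1)\succeq_m\vec m_\gamma(\pi_2)$. TLO: specification $(\succeq_L)$ with $\succeq_L$ a total preorder on $L_{\Pi^E}$; it induces $\pi_1\succeq\pi_2\iff L_{\pi_1}\succeq_L L_{\pi_2}$. *)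

From HB Require Import structures.
From mathcomp Require Import all_boot all_order all_algebra.
From mathcomp Require Import all_classical all_reals.
From mathcomp Require Import topology normedtype sequences.
Set Implicit Arguments. Unset Strict Implicit. Unset Printing Implicit Defensive.
Import Order.TTheory GRing.Theory Num.Theory numFieldNormedType.Exports.
Local Open Scope ring_scope.
Local Open Scope classical_set_scope.

Section Defs.
Variable R : realType.

Definition is_dist (X : finType) (f : X -> R) : Prop :=
  (forall x, 0 <= f x) /\ \sum_(x : X) f x = 1.

Record env (S A : finType) := Env {
  tr : S -> A -> S -> R;
  init : S -> R;
  tr_dist : forall s a, is_dist (tr s a);
  init_dist : is_dist init }.

Variables (S A : finType) (E : env S A).

Definition policy := { pi : S -> A -> R | forall s, is_dist (pi s) }.

(* Probability that the first k steps are (s_0,a_0,...,a_{k-1},s_k),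
   where ss i = s_i (i <= k) and aa i = a_i (i < k). *)
Definition traj_prob (pi : policy) (k : nat)
    (ss : {ffun 'I_k.+1 -> S}) (aa : {ffun 'I_k -> A}) : R :=
  init E (ss ord0) *
  \prod_(t < k) (sval pi (ss (widen_ord (leqnSn k) t)) (aa t) *
                 tr E (ss (widen_ord (leqnSn k) t)) (aa t) (ss (lift ord0 t))).

Definition step_prob (pi : policy) (t : nat) (s : S) (a : A) (s' : S) : R :=
  \sum_(ss : {ffun 'I_t.+2 -> S})
   \sum_(aa : {ffun 'I_t.+1 -> A}
          | [&& ss (inord t) == s, aa (inord t) == a & ss (inord t.+1) == s'])
     traj_prob pi ss aa.

Definition occupancy (g : R) (pi : policy) : S -> A -> S -> R :=
  fun s a s' => limn (series (fun t => g ^+ t * step_prob pi t s a s')).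

Definition lottery := forall k : nat, {ffun 'I_k.+1 -> S} -> {ffun 'I_k -> A} -> R.
Definition traj_lottery (pi : policy) : lottery := fun k ss aa => traj_prob pi ss aa.

(* J_i(pi) = E[sum_t g^t R_i(s_t,a_t,s_{t+1})], written (by linearity /
   dominated convergence for bounded rewards) as sum_t g^t E[R_i(...)]. *)
Definition Jret (g : R) (Rw : S -> A -> S -> R) (pi : policy) : R :=
  limn (series (fun t => g ^+ t * \sum_(s : S) \sum_(a : A) \sum_(s' : S)
                 step_prob pi t s a s' * Rw s a s')).

Definition Jvec (k : nat) (g : R) (Rw : S -> A -> S -> 'I_k -> R) (pi : policy)
  : 'I_k -> R := fun i => Jret g (fun s a s' => Rw s a s' i) pi.

Definition total_preorder_on (T : Type) (X : set T) (le : T -> T -> Prop) : Prop :=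
  (forall x y, X x -> X y -> le x y \/ le y x) /\
  (forall x y z, X x -> X y -> X z -> le x y -> le y z -> le x z).

Definition Ord_GOMORL : set (policy -> policy -> Prop) :=
  [set Rel | exists (k : nat) (Rw : S -> A -> S -> 'I_k -> R) (g : R)
               (leJ : ('I_k -> R) -> ('I_k -> R) -> Prop),
     0 <= g < 1 /\ total_preorder_on setT leJ /\
     forall p q, Rel p q <-> leJ (Jvec g Rw p) (Jvec g Rw q)].

Definition Ord_OMO : set (policy -> policy -> Prop) :=
  [set Rel | exists (g : R) (lem : (S -> A -> S -> R) -> (S -> A -> S -> R) -> Prop),
     0 <= g < 1 /\ total_preorder_on (range (occupancy g)) lem /\
     forall p q, Rel p q <-> lem (occupancy g p) (occupancy g q)].

Definition Ord_TLO : set (policy -> policy -> Prop) :=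
  [set Rel | exists (leL : lottery -> lottery -> Prop),
     total_preorder_on (range traj_lottery) leL /\
     forall p q, Rel p q <-> leL (traj_lottery p) (traj_lottery q)].

End Defs.

From HB Require Import structures.
From mathcomp Require Import all_boot all_order all_algebra.
From mathcomp Require Import all_classical all_reals.
From mathcomp Require Import topology normedtype sequences.
Set Implicit Arguments. Unset Strict Implicit. Unset Printing Implicit Defensive.
Import Order.TTheory GRing.Theory Num.Theory numFieldNormedType.Exports.
Local Open Scope ring_scope.

(* The expected discounted return of a reward is its inner product with the
   occupancy measure, and the occupancy measure is a function of the
   trajectory lottery; hence every GOMORL ordering is an OMO ordering and
   every OMO ordering is a TLO ordering.  Conversely, take as rewards the
   indicators of the |S x A| state-action pairs and gamma = 1/2: the return
   of the pair (s, a) is pi(a | s) d_pi(s), where d_pi is the discounted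
   state visitation.  Summing over a recovers d_pi, hence pi on the states
   with d_pi(s) > 0, which are the only states reached with positive
   probability; so the return vector determines the trajectory lottery, and
   every ordering of lotteries pulls back to an ordering of return vectors. *)

Definition snoc (T : Type) n (f : {ffun 'I_n -> T}) (x : T) : {ffun 'I_n.+1 -> T} :=
  [ffun i : 'I_n.+1 =>
     if @insub _ (fun k => (k < n)%N) 'I_n (val i) is Some j then f j else x].

Definition finit (T : Type) n (f : {ffun 'I_n.+1 -> T}) : {ffun 'I_n -> T} :=
  [ffun j => f (widen_ord (leqnSn n) j)].

Section Snoc.
Variable T : Type.

Lemma snoc_val n (f : {ffun 'I_n -> T}) x (i : 'I_n.+1) (j : 'I_n) :
  val i = val j -> snoc f x i = f j.
Proof.
move=> ij; rewrite ffunE insubT; first by rewrite ij ltn_ord.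
by move=> ?; congr (f _); apply: val_inj.
Qed.

Lemma snoc_last n (f : {ffun 'I_n -> T}) x (i : 'I_n.+1) :
  val i = n -> snoc f x i = x.
Proof. by move=> ij; rewrite ffunE insubF // ij ltnn. Qed.

Lemma finit_snoc n (f : {ffun 'I_n -> T}) x : finit (snoc f x) = f.
Proof. by apply/ffunP => j; rewrite ffunE (snoc_val _ _ (j := j)). Qed.

Lemma snoc_finit n (f : {ffun 'I_n.+1 -> T}) : snoc (finit f) (f ord_max) = f.
Proof.
apply/ffunP => i; have [lt_in|ge_in] := ltnP (val i) n.
  by rewrite (snoc_val _ _ (j := Ordinal lt_in)) // ffunE; congr (f _); apply: val_inj.
have ei : val i = n by apply/eqP; rewrite eqn_leq ge_in -ltnS ltn_ord.
by rewrite snoc_last //; congr (f _); apply: val_inj.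
Qed.

End Snoc.

Lemma sum_ffun_snoc (R : nmodType) (T : finType) n (F : {ffun 'I_n.+1 -> T} -> R) :
  \sum_(f : {ffun 'I_n.+1 -> T}) F f = \sum_(g : {ffun 'I_n -> T}) \sum_(x : T) F (snoc g x).
Proof.
rewrite pair_bigA /= (reindex (fun p : {ffun 'I_n -> T} * T => snoc p.1 p.2)) //=.
exists (fun f => (finit f, f ord_max)) => [[g x] _|f _] /=.
  by rewrite finit_snoc snoc_last.
exact: snoc_finit.
Qed.

Lemma sum_ffun_ord0 (R : nmodType) (T : finType) (F : {ffun 'I_0 -> T} -> R) :
  \sum_(f : {ffun 'I_0 -> T}) F f = F (ffun0 (card_ord 0)).
Proof. by apply: big_pred1 => f /=; apply/esym/eqP/ffunP => -[]. Qed.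

Lemma triple_bigA (R : nmodType) (I J K : finType) (F : I -> J -> K -> R) :
  \sum_i \sum_j \sum_k F i j k = \sum_(x : I * (J * K)) F x.1 x.2.1 x.2.2.
Proof. by under eq_bigr do rewrite pair_bigA; rewrite pair_bigA. Qed.

Lemma is_dist_le1 (R : realType) (X : finType) (f : X -> R) x :
  is_dist f -> 0 <= f x <= 1.
Proof. by move=> [f0 f1]; rewrite f0 -f1 (bigD1 x) //= lerDl sumr_ge0. Qed.

Lemma is_dist_pt (R : realType) (X : finType) (x0 : X) :
  is_dist (fun x => (x == x0)%:R : R).
Proof.
split=> [x|]; first by rewrite ler0n.
by rewrite (bigD1 x0) //= eqxx big1 ?addr0 // => x /negbTE ->.
Qed.

Definition dirac_policy (R : realType) (S A : finType) (a0 : A) : policy R S A :=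
  @exist _ (fun pi => forall s, is_dist (pi s)) (fun _ a => (a == a0)%:R)
    (fun _ => is_dist_pt R a0).

Section Trajectories.
Variables (R : realType) (S A : finType) (E : env R S A).
Implicit Types (p q : policy R S A).

Lemma traj_prob_snoc p k (ss : {ffun 'I_k.+1 -> S}) (aa : {ffun 'I_k -> A}) x b :
  traj_prob E p (snoc ss x) (snoc aa b) =
  traj_prob E p ss aa * (sval p (ss ord_max) b * tr E (ss ord_max) b x).
Proof.
rewrite /traj_prob big_ord_recr /= -mulrA; congr (_ * (_ * _)).
- by congr (init E _); apply: snoc_val.
- apply: eq_bigr => t _.
  rewrite (snoc_val _ _ (j := widen_ord (leqnSn k) t)) // (snoc_val _ _ (j := t)) //.
  by rewrite (snoc_val _ _ (j := lift ord0 t)).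
- rewrite (snoc_val _ _ (j := ord_max)) // (snoc_last _ _ (i := ord_max)) //.
  by rewrite (snoc_last _ _ (i := lift ord0 ord_max)).
Qed.

Lemma traj_prob_ge0 p k (ss : {ffun 'I_k.+1 -> S}) (aa : {ffun 'I_k -> A}) :
  0 <= traj_prob E p ss aa.
Proof.
rewrite /traj_prob mulr_ge0 ?(proj1 (init_dist E)) //.
apply: prodr_ge0 => t _; apply: mulr_ge0.
  exact: (proj1 (svalP p _)).
exact: (proj1 (tr_dist E _ _)).
Qed.

Lemma sum_traj_prob p k :
  \sum_(ss : {ffun 'I_k.+1 -> S}) \sum_(aa : {ffun 'I_k -> A}) traj_prob E p ss aa = 1.
Proof.
elim: k => [|k IH].
  rewrite sum_ffun_snoc sum_ffun_ord0 -[RHS](proj2 (init_dist E)).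
  apply: eq_bigr => x _.
  by rewrite sum_ffun_ord0 /traj_prob big_ord0 mulr1 (snoc_last _ _ (i := ord0)).
rewrite sum_ffun_snoc -[RHS]IH; apply: eq_bigr => ss _.
under eq_bigr do rewrite sum_ffun_snoc.
rewrite exchange_big /=; apply: eq_bigr => aa _.
under eq_bigr => x _ do under eq_bigr => b _ do rewrite traj_prob_snoc.
rewrite exchange_big /= -[RHS]mulr1 -(proj2 (svalP p (ss ord_max))) mulr_sumr.
apply: eq_bigr => b _.
by rewrite -mulr_sumr -mulr_sumr (proj2 (tr_dist E _ _)) mulr1.
Qed.

Definition state_prob p t (s : S) : R :=
  \sum_(ss : {ffun 'I_t.+1 -> S}) \sum_(aa : {ffun 'I_t -> A})
     (if ss ord_max == s then traj_prob E p ss aa else 0).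

Lemma state_prob_bounds p t s : 0 <= state_prob p t s <= 1.
Proof.
apply/andP; split.
  by do 2 (apply: sumr_ge0 => ? _); case: ifP => // _; apply: traj_prob_ge0.
rewrite -(sum_traj_prob p t); do 2 (apply: ler_sum => ? _).
by case: ifP => // _; apply: traj_prob_ge0.
Qed.

Lemma traj_prob_le_state_prob p k (ss : {ffun 'I_k.+1 -> S}) (aa : {ffun 'I_k -> A}) :
  traj_prob E p ss aa <= state_prob p k (ss ord_max).
Proof.
rewrite /state_prob (bigD1 ss) //= (bigD1 aa) //= eqxx -addrA lerDl.
rewrite addr_ge0 ?sumr_ge0 // => [aa' _|ss' _]; first exact: traj_prob_ge0.
by apply: sumr_ge0 => aa' _; case: ifP => // _; apply: traj_prob_ge0.
Qed.

Lemma step_probE p t s a s' :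
  step_prob E p t s a s' = state_prob p t s * (sval p s a * tr E s a s').
Proof.
rewrite /step_prob /state_prob mulr_suml.
under eq_bigr => ss _ do rewrite big_mkcond.
rewrite sum_ffun_snoc; apply: eq_bigr => ss _.
under eq_bigr => x _ do rewrite sum_ffun_snoc.
have last_step x (aa : {ffun 'I_t -> A}) b :
  (if [&& snoc ss x (inord t) == s, snoc aa b (inord t) == a
        & snoc ss x (inord t.+1) == s']
   then traj_prob E p (snoc ss x) (snoc aa b) else 0) =
  (if x == s' then (if b == a then
     (if ss ord_max == s then traj_prob E p ss aa else 0) * (sval p s a * tr E s a s')
     else 0) else 0).
  rewrite (snoc_val _ _ (j := ord_max)); last by apply: inordK; rewrite ltnS leqnSn.
  rewrite (snoc_last _ _ (i := inord t)); last exact: inordK.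
  rewrite (snoc_last _ _ (i := inord t.+1)); last exact: inordK.
  rewrite traj_prob_snoc.
  have [->|] := eqVneq x s'; last by rewrite !andbF.
  have [->|] := eqVneq b a; last by rewrite !andbF.
  by have [->|] := eqVneq (ss ord_max) s; rewrite ?mul0r.
under eq_bigr do under eq_bigr do under eq_bigr do rewrite last_step.
rewrite exchange_big /= mulr_suml; apply: eq_bigr => aa _.
rewrite (bigD1 s') //= eqxx -big_mkcond big_pred1_eq big1 ?addr0 // => x /negbTE ->.
by rewrite big1.
Qed.

Lemma step_prob_bounds p t s a s' : 0 <= step_prob E p t s a s' <= 1.
Proof.
rewrite step_probE.
have /andP[q0 q1] := state_prob_bounds p t s.
have /andP[p0 p1] := is_dist_le1 a (svalP p s).
have /andP[t0 t1] := is_dist_le1 s' (tr_dist E s a).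
rewrite !mulr_ge0 //= -[1]mulr1 ler_pM ?mulr_ge0 //.
by rewrite -[1]mulr1 ler_pM.
Qed.

Lemma sum_step_prob p t s a :
  \sum_(s' : S) step_prob E p t s a s' = state_prob p t s * sval p s a.
Proof.
under eq_bigr do rewrite step_probE mulrA.
by rewrite -mulr_sumr (proj2 (tr_dist E s a)) mulr1.
Qed.

End Trajectories.

Section Series.
Variable R : realType.

Lemma is_cvg_discounted_series (g : R) (u : nat -> R) :
  0 <= g < 1 -> (forall t, 0 <= u t <= 1) -> cvgn (series (fun t => g ^+ t * u t)).
Proof.
move=> /andP[g0 g1] u01.
apply: (@series_le_cvg _ _ (geometric 1 g)) => [n|n|n|].
- by rewrite mulr_ge0 ?exprn_ge0 // (andP (u01 n)).1.
- by rewrite /= mul1r exprn_ge0.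
- by rewrite /= mul1r ler_piMr ?exprn_ge0 // (andP (u01 n)).2.
- by apply: is_cvg_geometric_series; rewrite ger0_norm.
Qed.

Lemma lim_seriesMl (c : R) (u : nat -> R) : cvgn (series u) ->
  limn (series (fun t => c * u t)) = c * limn (series u).
Proof. by move=> cu; rewrite -[RHS]/(c *: _) -lim_seriesZ. Qed.

Lemma lim_series_sum (I : finType) (u : I -> nat -> R) :
  (forall i, cvgn (series (u i))) ->
  limn (series (fun t => \sum_i u i t)) = \sum_i limn (series (u i)).
Proof.
move=> cu; rewrite -fct_sumE.
suff [] : cvgn (series (\sum_i u i)) /\
          limn (series (\sum_i u i)) = \sum_i limn (series (u i)) by [].
apply: (big_ind2 (fun v l => cvgn (series v) /\ limn (series v) = l)).
- rewrite (_ : series 0 = 0); last by apply/funext => n; rewrite /series /= big1.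
  by split; [apply: is_cvg_cst | apply: lim_cst].
- move=> v l w m [cv <-] [cw <-].
  split; [exact: (is_cvg_seriesD cv cw) | exact: (lim_seriesD cv cw)].
- by move=> i _; split.
Qed.

Lemma le_lim_series (u : nat -> R) t : (forall n, 0 <= u n) -> cvgn (series u) ->
  u t <= limn (series u).
Proof.
move=> u0 cu.
have nd : nondecreasing_seq (series u) by apply: nondecreasing_series => n _ _.
apply: le_trans (nondecreasing_cvgn_le nd cu t.+1).
by rewrite /series /= big_nat_recr //= lerDr sumr_ge0.
Qed.

End Series.

Lemma Jret_occupancy (R : realType) (S A : finType) (E : env R S A) (g : R)
    (Rw : S -> A -> S -> R) (p : policy R S A) : 0 <= g < 1 ->
  Jret E g Rw p = \sum_s \sum_a \sum_s' occupancy E g p s a s' * Rw s a s'.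
Proof.
move=> g01; rewrite /Jret triple_bigA.
under eq_fun do rewrite triple_bigA mulr_sumr.
rewrite lim_series_sum => [|x]; last first.
  under eq_fun do rewrite mulrA mulrC.
  apply: is_cvg_seriesZ.
  by apply: is_cvg_discounted_series => // t; apply: step_prob_bounds.
apply: eq_bigr => x _; under eq_fun do rewrite mulrA mulrC.
rewrite lim_seriesMl 1?mulrC //.
by apply: is_cvg_discounted_series => // t; apply: step_prob_bounds.
Qed.

Section Visitation.
Variables (R : realType) (S A : finType) (E : env R S A) (g : R).
Hypotheses (g_gt0 : 0 < g) (g_lt1 : g < 1).
Implicit Types (p q : policy R S A).

Let g01 : 0 <= g < 1. Proof. by rewrite ltW. Qed.

Definition visitation p s := limn (series (fun t => g ^+ t * state_prob E p t s)).

Lemma is_cvg_visitation p s : cvgn (series (fun t => g ^+ t * state_prob E p t s)).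
Proof. by apply: is_cvg_discounted_series => // t; apply: state_prob_bounds. Qed.

Lemma Jret_sa_indicator p (e : S * A) :
  Jret E g (fun s a _ => (e == (s, a))%:R) p = sval p e.1 e.2 * visitation p e.1.
Proof.
rewrite /Jret /visitation -lim_seriesMl; last exact: is_cvg_visitation.
congr (limn (series _)); apply/funext => t; rewrite mulrCA; congr (_ * _).
case: e => s0 a0 /=.
rewrite (bigD1 s0) //= [X in _ + X]big1 ?addr0 => [|s ns0]; last first.
  by do 2 (apply: big1 => ? _); rewrite xpair_eqE eq_sym (negbTE ns0) mulr0.
rewrite (bigD1 a0) //= [X in _ + X]big1 ?addr0 => [|a na0]; last first.
  by apply: big1 => ? _; rewrite xpair_eqE eqxx eq_sym (negbTE na0) mulr0.
under eq_bigr do rewrite xpair_eqE !eqxx mulr1.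
by rewrite sum_step_prob mulrC.
Qed.

Lemma traj_prob_le_visitation p k (ss : {ffun 'I_k.+1 -> S}) (aa : {ffun 'I_k -> A}) :
  g ^+ k * traj_prob E p ss aa <= visitation p (ss ord_max).
Proof.
have gk0 n : 0 <= g ^+ n by rewrite exprn_ge0 // ltW.
have terms_ge0 n : 0 <= g ^+ n * state_prob E p n (ss ord_max).
  by rewrite mulr_ge0 // (andP (state_prob_bounds E p n _)).1.
apply: le_trans (le_lim_series k terms_ge0 (@is_cvg_visitation p _)).
by rewrite ler_wpM2l // traj_prob_le_state_prob.
Qed.

Lemma traj_lottery_eq_of_visitation p q :
  (forall s a, sval p s a * visitation p s = sval q s a * visitation q s) ->
  traj_lottery E p = traj_lottery E q.
Proof.
move=> eq_sa.
have eq_visit s : visitation p s = visitation q s.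
  rewrite -[LHS]mul1r -(proj2 (svalP p s)) -[RHS]mul1r -(proj2 (svalP q s)).
  by rewrite !mulr_suml; apply: eq_bigr => a _.
have eq_pol s a : visitation p s != 0 -> sval p s a = sval q s a.
  by move=> nz; apply: (mulIf nz); rewrite eq_sa eq_visit.
(* a prefix of positive probability only visits states of positive visitation *)
have eq_traj k (ss : {ffun 'I_k.+1 -> S}) aa : traj_prob E p ss aa = traj_prob E q ss aa.
  elim: k ss aa => [|k IH] ss aa; first by rewrite /traj_prob !big_ord0.
  rewrite -(snoc_finit ss) -(snoc_finit aa) !traj_prob_snoc IH.
  set c := traj_prob E q _ _.
  have [->|c_neq0] := eqVneq c 0; first by rewrite !mul0r.
  rewrite eq_pol //; apply/lt0r_neq0.
  apply: (lt_le_trans _ (traj_prob_le_visitation p _ (finit aa))).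
  by rewrite IH -/c mulr_gt0 ?exprn_gt0 // lt_def c_neq0 traj_prob_ge0.
apply: functional_extensionality_dep => k.
by apply/funext => ss; apply/funext => aa; apply: eq_traj.
Qed.

Definition sa_indicator (s : S) (a : A) (_ : S) (i : 'I_#|{: S * A}|) : R :=
  (enum_val i == (s, a))%:R.

Lemma traj_lottery_eq_of_Jvec p q :
  Jvec E g sa_indicator p = Jvec E g sa_indicator q ->
  traj_lottery E p = traj_lottery E q.
Proof.
move=> eqJ; apply: traj_lottery_eq_of_visitation => s a.
have := congr1 (fun J => J (enum_rank (s, a))) eqJ.
by rewrite /Jvec /sa_indicator /= !Jret_sa_indicator enum_rankK.
Qed.

End Visitation.

Arguments sa_indicator {R S A}.

Section InducedOrders.

Definition induced_by (P X : Type) (D : set X) (f : P -> X) (Rel : P -> P -> Prop) :=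
  exists le, total_preorder_on D le /\ forall p q, Rel p q <-> le (f p) (f q).

Lemma induced_by_comp (P X Y : Type) (D : set Y) (D' : set X)
    (f : P -> Y) (f' : P -> X) (h : X -> Y) (Rel : P -> P -> Prop) :
  (forall p, f p = h (f' p)) -> (forall x, D' x -> D (h x)) ->
  induced_by D f Rel -> induced_by D' f' Rel.
Proof.
move=> fE hD [le [[le_total le_trans] relE]].
exists (fun x y => le (h x) (h y)); split; last by move=> p q; rewrite relE !fE.
split=> [x y Dx Dy|x y z Dx Dy Dz]; first by apply: le_total; apply: hD.
by apply: le_trans; apply: hD.
Qed.

Lemma factor_through (P X Y : Type) (f : P -> Y) (f' : P -> X) (p0 : P) :
  (forall p q, f' p = f' q -> f p = f q) ->
  exists h : X -> Y, (forall p, f p = h (f' p)) /\ (forall x, range f (h x)).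
Proof.
move=> f_f'.
exists (fun x => if pselect (exists p, f' p = x) is left ex then f (projT1 (cid ex))
                 else f p0).
split=> [p|x]; case: pselect => [ex|nex] //=.
- by apply: f_f'; rewrite (projT2 (cid ex)).
- by exfalso; apply: nex; exists p.
- by exists (projT1 (cid ex)).
- by exists p0.
Qed.

End InducedOrders.

Section Expressivity.
Local Open Scope classical_set_scope.
Variables (R : realType) (S A : finType) (E : env R S A).

Definition occupancy_of_lottery (g : R) (L : lottery R S A) : S -> A -> S -> R :=
  fun s a s' => limn (series (fun t => g ^+ t *
    \sum_(ss : {ffun 'I_t.+2 -> S})
     \sum_(aa : {ffun 'I_t.+1 -> A}
        | [&& ss (inord t) == s, aa (inord t) == a & ss (inord t.+1) == s'])
       L t.+1 ss aa)).

Lemma Ord_GOMORL_sub_OMO : Ord_GOMORL E `<=` Ord_OMO E.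
Proof.
move=> Rel [k [Rw [g [leJ [g01 ordJ]]]]].
pose F m : 'I_k -> R := fun i => \sum_s \sum_a \sum_s' m s a s' * Rw s a s' i.
have [lem ordm] : induced_by (range (occupancy E g)) (occupancy E g) Rel.
  apply: (induced_by_comp (h := F) _ (fun _ _ => I)); last exact: (ex_intro _ leJ ordJ).
  by move=> p; apply/funext => i; apply: Jret_occupancy.
by exists g, lem.
Qed.

Lemma Ord_OMO_sub_TLO : Ord_OMO E `<=` Ord_TLO E.
Proof.
move=> Rel [g [lem [g01 ordm]]].
suff [leL ordL] : induced_by (range (traj_lottery E)) (traj_lottery E) Rel.
  by exists leL.
apply: (induced_by_comp (D := range (occupancy E g)) (h := occupancy_of_lottery g)
                        (fun _ => erefl)).
  by move=> _ [p _ <-]; exists p.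
exact: (ex_intro _ lem ordm).
Qed.

Lemma Ord_TLO_sub_GOMORL (a0 : A) : Ord_TLO E `<=` Ord_GOMORL E.
Proof.
move=> Rel ordL.
pose g : R := 2^-1.
have g_gt0 : 0 < g by rewrite invr_gt0.
have g_lt1 : g < 1 by rewrite invf_lt1 // ltr1n.
have [h [hE h_range]] := factor_through (@dirac_policy R S A a0)
  (traj_lottery_eq_of_Jvec (E := E) g_gt0 g_lt1).
have [leJ ordJ] : induced_by setT (Jvec E g sa_indicator) Rel.
  by apply: (induced_by_comp (D := range (traj_lottery E)) hE) => // x _; apply: h_range.
by exists #|{: S * A}|, sa_indicator, g, leJ; rewrite ltW.
Qed.

End Expressivity.

Theorem theorem3 (R : realType) (S A : finType) (E : env R S A)
    (HS : (0 < #|S|)%N) (HA : (0 < #|A|)%N) :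
  Ord_GOMORL E = Ord_OMO E /\ Ord_OMO E = Ord_TLO E.
Proof.
have [a0 _] := card_gt0P HA.
have GO := @Ord_GOMORL_sub_OMO R S A E.
have OT := @Ord_OMO_sub_TLO R S A E.
have TG := @Ord_TLO_sub_GOMORL R S A E a0.
split; apply/seteqP; split=> // Rel.
- by move/OT/TG.
- by move/TG/GO.
Qed.
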